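(* Let $p$ be a prime number and let $d>1$ be an integer. Let $T_d$ be the $d$-th Chebyshev polynomial of the first kind, viewed as a self-map of $\mathbb{A}^1(\mathbb{F}_p)=\mathbb{F}_p$ (coefficients reduced modulo $p$), and extended to $\mathbb{P}^1(\mathbb{F}_p)=\mathbb{F}_p\cup\{\infty\}$ by $T_d(\infty)=\infty$. Let $m^-$ be the largest divisor of $p-1$ that is relatively prime to $d$, and $m^+$ the largest divisor of $p+1$ that is relatively prime to $d$. Then $$\#\mathrm{Per}(T_d,\mathbb{A}^1(\mathbb{F}_p))=\frac{m^-+m^+}{2},\qquad \#\mathrm{Per}(T_d,\mathbb{P}^1(\mathbb{F}_p))=\frac{m^-+m^+}{2}+1.$$
   Context: The $d$-th Chebyshev polynomial of the first kind $T_d\in\mathbb{Z}[z]$ is the monic degree-$d$ polynomial satisfying $T_d(z+z^{-1})=z^d+z^{-d}$. For a self-map $f$ of a finite set $S$, a point $x$ is periodic if $f^n(x)=x$ for some $n\ge1$, and $\mathrm{Per}(f,S)$ is the set of periodic points of $f$ in $S$. *)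

From HB Require Import structures.
From mathcomp Require Import all_boot all_order all_algebra.
From mathcomp Require Import boolp.
Set Implicit Arguments. Unset Strict Implicit. Unset Printing Implicit Defensive.
Import GRing.Theory.
Local Open Scope ring_scope.

(* Normalized Chebyshev polynomials of the first kind (monic):
   T_0 = 2, T_1 = X, T_{n+2} = X T_{n+1} - T_n,
   so that T_d(z + z^-1) = z^d + z^-d. *)
Fixpoint cheb_pair (n : nat) : {poly int} * {poly int} :=
  match n with
  | 0%N => (2%:P, 'X)
  | n'.+1 => let: (a, b) := cheb_pair n' in (b, 'X * b - a)
  end.
Definition cheb (d : nat) : {poly int} := (cheb_pair d).1.

Definition chebA (p d : nat) (x : 'F_p) : 'F_p :=
  (map_poly (fun z : int => z%:~R) (cheb d)).[x].

(* P^1(F_p) = F_p ∪ {∞}, with ∞ encoded as None, and T_d(∞) = ∞. *)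
Definition chebP (p d : nat) (x : option 'F_p) : option 'F_p :=
  omap (@chebA p d) x.

Definition is_periodic (T : Type) (f : T -> T) (x : T) : Prop :=
  exists n : nat, (0 < n)%N /\ iter n f x = x.
Definition Per (T : finType) (f : T -> T) : {set T} :=
  [set x | `[< is_periodic f x >]].

Definition max_coprime_div (n d : nat) : nat :=
  (\max_(k < n.+1 | (k %| n)%N && coprime k d) k)%N.

From HB Require Import structures.
From mathcomp Require Import all_boot all_order all_algebra all_fingroup all_solvable all_field.
From mathcomp Require Import boolp.
From mathcomp Require Import ring.

(* Work in L = F_(p^2) with psi z = z + z^-1, so that T_d (psi z) = psi (z ^+ d).
   As psi identifies exactly z with z^-1, for a | p-1 and b | p+1 of equal parity
   2 |psi (mu_a ∪ mu_b)| = |mu_a ∪ mu_b| + |{1, -1} ∩ (mu_a ∪ mu_b)| = a + b, since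
   mu_a and mu_b meet only in {1, -1}. For a = p-1 and b = p+1 these are p values
   fixed by Frobenius, so every x in F_p is psi z for some z in mu_(p-1) ∪ mu_(p+1).
   Such an x is periodic iff z ^+ (d ^ n) is z or z^-1 for some n > 0, i.e. iff the
   order of z is coprime to d, i.e. iff z lies in mu_(m^-) ∪ mu_(m^+), whose image
   under psi has (m^- + m^+) / 2 elements. On P^1, infinity is one more fixed point. *)

Set Implicit Arguments. Unset Strict Implicit. Unset Printing Implicit Defensive.
Import GRing.Theory.

Section Chebyshev.
Local Open Scope ring_scope.

Lemma cheb_rec n : cheb n.+2 = 'X * cheb n.+1 - cheb n.
Proof. by rewrite /cheb /=; case: (cheb_pair n). Qed.

Lemma horner_cheb (F : fieldType) (w : F) n : w != 0 ->
  (map_poly intr (cheb n)).[w + w^-1] = w ^+ n + w ^- n.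
Proof.
move=> w0; suff [] : (map_poly intr (cheb n)).[w + w^-1] = w ^+ n + w ^- n /\
    (map_poly intr (cheb n.+1)).[w + w^-1] = w ^+ n.+1 + w ^- n.+1 by [].
elim: n => [|n [IHn IHn1]].
  by rewrite /cheb /= map_polyC map_polyX hornerC hornerX expr0 invr1 expr1.
split=> //; rewrite cheb_rec rmorphB rmorphM /= map_polyX !hornerE IHn IHn1.
have wn0 : w ^+ n != 0 by rewrite expf_neq0.
by rewrite !exprS !invfM; field; rewrite wn0 w0.
Qed.

End Chebyshev.

Section MaxCoprimeDiv.
Variables n d : nat.
Hypothesis n_gt0 : (0 < n)%N.

Lemma max_coprime_divP :
  [/\ max_coprime_div n d %| n, coprime (max_coprime_div n d) d &
      forall k, k %| n -> coprime k d -> k %| max_coprime_div n d].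
Proof.
have one_ok : (1 %| n) && coprime 1 d by rewrite dvd1n coprime1n.
rewrite /max_coprime_div (bigmax_eq_arg (@Ordinal n.+1 1 (n_gt0 : 1 < n.+1)%N)) //.
case: arg_maxnP => // i /andP[i_dvd i_cop] i_max; split=> // k k_dvd k_cop.
have lcm_dvd : lcmn k i %| n by rewrite dvdn_lcm k_dvd.
have lcm_cop : coprime (lcmn k i) d.
  have lcm_dvd_mul : lcmn k i %| k * i by rewrite dvdn_lcm dvdn_mulr ?dvdn_mull.
  by apply: coprime_dvdl lcm_dvd_mul _; rewrite coprimeMl k_cop.
have lcm_lt : (lcmn k i < n.+1)%N by rewrite ltnS dvdn_leq.
have := i_max (Ordinal lcm_lt); rewrite /= lcm_dvd lcm_cop => /(_ isT) lcm_le.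
apply/lcmn_idPr/eqP; rewrite eqn_leq lcm_le dvdn_leq ?dvdn_lcmr //.
by rewrite lcmn_gt0 (dvdn_gt0 n_gt0 k_dvd) (dvdn_gt0 n_gt0 i_dvd).
Qed.

Lemma max_coprime_div_gt0 : (0 < max_coprime_div n d)%N.
Proof. by have [m_dvd _ _] := max_coprime_divP; apply: dvdn_gt0 m_dvd. Qed.

Lemma odd_max_coprime_div : odd (max_coprime_div n d) = odd n || ~~ odd d.
Proof.
have [m_dvd m_cop m_max] := max_coprime_divP.
apply: negb_inj; rewrite negb_or negbK -!dvdn2; apply/idP/andP => [m2|[n2 d_odd]].
  by rewrite (dvdn_trans m2 m_dvd) -coprime2n (coprime_dvdl m2 m_cop).
by apply: m_max; rewrite ?coprime2n.
Qed.

End MaxCoprimeDiv.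

Lemma coprime_pred_expn d k : (0 < d)%N -> (0 < k)%N -> coprime (d ^ k).-1 d.
Proof.
move=> d_gt0 k_gt0; rewrite /coprime -dvdn1.
have g_dvdX : gcdn (d ^ k).-1 d %| d ^ k.
  exact: dvdn_trans (dvdn_gcdr _ _) (dvdn_exp k_gt0 (dvdnn d)).
by rewrite -(dvdn_addr 1 (dvdn_gcdl _ _)) addn1 prednK ?expn_gt0 ?d_gt0.
Qed.

Lemma pred_prime_gt0 p : prime p -> (0 < p.-1)%N.
Proof. by move=> p_pr; rewrite -subn1 subn_gt0 prime_gt1. Qed.

Lemma odd_pred_succ n : (0 < n)%N -> odd n.-1 = odd n.+1.
Proof. by case: n => //= n _; rewrite negbK. Qed.

Lemma in_Per (T : finType) (f : T -> T) x :
  x \in Per f <-> exists2 n, (0 < n)%N & iter n f x = x.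
Proof.
rewrite inE; split=> [/asboolP[n [n_gt0 per]]|[n n_gt0 per]]; first by exists n.
by apply/asboolP; exists n.
Qed.

Lemma Per_omap (T : finType) (f : T -> T) : Per (omap f) = None |: (Some @: Per f).
Proof.
have iter_some n x : iter n (omap f) (Some x) = Some (iter n f x).
  by elim: n => //= n ->.
apply/setP => -[x|]; rewrite in_setU1 //=; last by apply/in_Per; exists 1%N.
rewrite (mem_imset _ _ Some_inj).
apply/idP/idP => /in_Per[n n_gt0 per]; apply/in_Per; exists n => //.
  by move: per; rewrite iter_some => -[].
by rewrite iter_some per.
Qed.

Lemma card_fibers (T U : finType) (f : T -> U) (A : {set T}) (B : {set U}) :
  {in A, forall x, f x \in B} -> #|A| = \sum_(y in B) #|[set x in A | f x == y]|.
Proof.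
move=> fAB; rewrite -sum1_card (partition_big f (mem B)) //=.
by apply: eq_bigr => y _; rewrite -sum1_card; apply: eq_bigl => x; rewrite inE.
Qed.

Lemma card_le_fibers (T U : finType) (f : T -> U) (A : {set T}) (B : {set U}) c :
  {in A, forall x, f x \in B} -> {in B, forall y, #|[set x in A | f x == y]| <= c} ->
  #|A| <= #|B| * c.
Proof.
move=> fAB fib_le; rewrite (card_fibers fAB) -sum_nat_const.
by apply: leq_sum => y; apply: fib_le.
Qed.

Section FiniteField.
Local Open Scope ring_scope.
Variable F : finFieldType.

Definition mu (k : nat) : {set F} := [set z | z ^+ k == 1].

Lemma card_roots_lt_size (q : {poly F}) (A : {set F}) :
  q != 0 -> {in A, forall x, root q x} -> (#|A| < size q)%N.
Proof.
move=> q0 rootA; rewrite cardE max_poly_roots ?enum_uniq //.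
by apply/allP => x; rewrite mem_enum; apply: rootA.
Qed.

Lemma mu_subset a b : (a %| b)%N -> mu a \subset mu b.
Proof. by move=> ab; apply/subsetP => z; rewrite !inE => /eqP za; rewrite (expr_dvd za ab). Qed.

Lemma notin_mu0 k : (0 < k)%N -> 0 \notin mu k.
Proof. by move=> k_gt0; rewrite inE expr0n gtn_eqF // eq_sym oner_eq0. Qed.

Lemma card_mu_le k : (0 < k)%N -> (#|mu k| <= k)%N.
Proof.
move=> k_gt0; rewrite -ltnS -(size_XnsubC (1 : F) k_gt0).
apply: card_roots_lt_size => [|z]; first by rewrite -size_poly_eq0 size_XnsubC.
by rewrite inE /root !hornerE subr_eq0.
Qed.

Lemma expf_card_pred (z : F) : z != 0 -> z ^+ #|F|.-1 = 1.
Proof.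
move=> z0; apply: (mulfI z0); rewrite mulr1 -exprS prednK ?expf_card //.
exact/ltnW/finNzRing_gt1.
Qed.

Lemma card_mu k : (0 < k)%N -> (k %| #|F|.-1)%N -> #|mu k| = k.
Proof.
move=> k_gt0 k_dvd; apply/eqP; rewrite eqn_leq card_mu_le //=.
have F1_gt0 : (0 < #|F|.-1)%N by rewrite -subn1 subn_gt0 finNzRing_gt1.
pose e := (#|F|.-1 %/ k)%N; have F1E : #|F|.-1 = (e * k)%N by rewrite divnK.
have e_gt0 : (0 < e)%N by move: F1_gt0; rewrite F1E muln_gt0 => /andP[].
rewrite -(leq_pmul2l e_gt0) [X in (_ <= X)%N]mulnC -F1E -[X in (X <= _)%N](cardsC1 (0 : F)).
apply: (card_le_fibers (f := fun z => z ^+ e)) => [z|y _].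
  by rewrite !inE => z0; rewrite -exprM -F1E expf_card_pred.
rewrite -ltnS -(size_XnsubC y e_gt0).
apply: card_roots_lt_size => [|z]; first by rewrite -size_poly_eq0 size_XnsubC.
by rewrite !inE /root !hornerE subr_eq0 => /andP[].
Qed.

Definition psi (z : F) := z + z^-1.

Lemma eq_psi z w : z != 0 -> w != 0 -> psi z = psi w -> w = z \/ w = z^-1.
Proof.
move=> z0 w0 psi_zw.
have : (w - z) * (w - z^-1) = w * (psi w - psi z) by rewrite /psi; field; rewrite z0 w0.
by rewrite psi_zw subrr mulr0 => /eqP; rewrite mulf_eq0 !subr_eq0 => /orP[]/eqP; [left|right].
Qed.

Definition pm1 : {set F} := [set 1; -1].

Lemma card_inv_pair z : z != 0 ->
  (#|[set z; z^-1]| + #|[set z; z^-1] :&: pm1|)%N = 2%N.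
Proof.
move=> z0; have pm1V w : w \in pm1 -> w^-1 = w.
  by rewrite !inE => /orP[]/eqP->; rewrite ?invr1 ?invrN1.
have [zV|zV] := eqVneq z^-1 z.
  have z_pm1 : z \in pm1 by rewrite !inE -sqrf_eq1 expr2 -{1}zV mulVf.
  by rewrite zV setUid (setIidPl _) ?sub1set // cards1.
suff -> : [set z; z^-1] :&: pm1 = set0 by rewrite cards0 cards2 eq_sym zV.
apply/setP => w; rewrite in_set0 in_setI; apply/andP => -[w_z /pm1V wV].
case/set2P: w_z wV => ->; first by move/eqP; rewrite (negbTE zV).
by rewrite invrK => zzV; rewrite -zzV eqxx in zV.
Qed.

Lemma card_psi_imset (Q : {set F}) : 0 \notin Q -> {in Q, forall z, z^-1 \in Q} ->
  (2 * #|psi @: Q|)%N = (#|Q| + #|Q :&: pm1|)%N.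
Proof.
move=> Q0 QV; have psiQ : {in Q, forall z, psi z \in psi @: Q} by move=> z; apply: imset_f.
have psiQpm1 : {in Q :&: pm1, forall z, psi z \in psi @: Q} by move=> z /setIP[/psiQ].
rewrite (card_fibers psiQ) (card_fibers psiQpm1) -big_split mulnC -sum_nat_const /=.
apply: eq_bigr => _ /imsetP[z zQ ->].
have z0 : z != 0 by apply: contraNneq Q0 => <-.
have fibE : [set w in Q | psi w == psi z] = [set z; z^-1].
  apply/setP => w; rewrite !inE; apply/andP/orP => [[wQ /eqP psi_wz]|].
    have w0 : w != 0 by apply: contraNneq Q0 => <-.
    by case: (eq_psi z0 w0 (esym psi_wz)) => ->; [left|right].
  by case=> /eqP->; rewrite ?QV // /psi ?invrK 1?addrC eqxx.
rewrite -(card_inv_pair z0) -fibE; congr (_ + #|_|)%N.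
by rewrite !setIdE setIAC.
Qed.

Lemma mu_max_coprime_div (z : F) q d N : (0 < q)%N ->
  z ^+ q = 1 -> z ^+ N = 1 -> coprime N d -> z \in mu (max_coprime_div q d).
Proof.
move=> q_gt0 zq zN N_cop; have [a _ gcdE] := Bezoutl N q_gt0.
have zg : z ^+ gcdn q N = 1.
  by move: (expr_dvd zq gcdE); rewrite exprD mulnC exprM zN expr1n mulr1.
have [_ _ max_dvd] := max_coprime_divP d q_gt0.
rewrite inE (expr_dvd zg) // max_dvd ?dvdn_gcdl //.
exact: coprime_dvdl (dvdn_gcdr q N) N_cop.
Qed.

End FiniteField.
Arguments mu {F} k.
Arguments psi {F} z.
Arguments pm1 {F}.

Section QuadraticExtension.
Local Open Scope ring_scope.
Variables (p : nat) (L : finFieldType) (iota : {rmorphism 'F_p -> L}).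
Hypotheses (p_pr : prime p) (pcharL : p \in [pchar L]) (cardL : #|L| = (p ^ 2)%N).

Local Notation mu := (@mu L).

Let p_gt0 : (0 < p)%N := prime_gt0 p_pr.
Let predp_gt0 : (0 < p.-1)%N := pred_prime_gt0 p_pr.

Lemma card_L_pred : #|L|.-1 = (p.-1 * p.+1)%N.
Proof. by rewrite cardL -subn1 -[in LHS](exp1n 2) subn_sqr subn1 addn1. Qed.

Lemma card_psi_mu_union a b : (0 < a)%N -> (0 < b)%N -> (a %| p.-1)%N -> (b %| p.+1)%N ->
  odd a = odd b -> (2 * #|psi @: (mu a :|: mu b)|)%N = (a + b)%N.
Proof.
move=> a_gt0 b_gt0 a_dvd b_dvd odd_ab.
have mu_pm1 z : z \in pm1 -> (z \in mu a) = (z \in mu b).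
  by rewrite !inE => /orP[]/eqP->; rewrite ?expr1n // -signr_odd odd_ab signr_odd.
have mu_sqrt1 z : z \in mu a :&: mu b -> z \in pm1.
  rewrite !inE => /andP[/eqP za /eqP zb]; rewrite -sqrf_eq1.
  have : z ^+ p.+1 = z ^+ p.-1 * z ^+ 2 by rewrite -exprD addn2 prednK.
  by rewrite (expr_dvd za a_dvd) (expr_dvd zb b_dvd) mul1r => <-.
have pm1E : (mu a :|: mu b) :&: pm1 = mu a :&: mu b.
  apply/setP => z; rewrite !in_setI in_setU; case: (boolP (z \in pm1)) => [z_pm1|z_pm1].
    by rewrite (mu_pm1 _ z_pm1) orbb andbb andbT.
  by rewrite andbF; apply/esym/negbTE; apply: contra z_pm1 => z_mu; apply: mu_sqrt1; rewrite inE.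
rewrite card_psi_imset ?pm1E.
- by rewrite cardsUI !card_mu // card_L_pred; [apply: dvdn_mull | apply: dvdn_mulr].
- by rewrite in_setU negb_or !notin_mu0.
by move=> z; rewrite !inE !exprVn => /orP[]/eqP->; rewrite invr1 eqxx ?orbT.
Qed.

Lemma fixed_expp_in_Fp y : y ^+ p = y -> y \in iota @: [set: 'F_p].
Proof.
move=> yp; apply/negPn/negP => y_notin.
have sizeXp : size ('X^p - 'X : {poly L}) = p.+1.
  by rewrite size_polyDl ?size_polyXn // size_polyN size_polyX ltnS prime_gt1.
suff : (#|y |: iota @: [set: 'F_p]| < p.+1)%N.
  by rewrite cardsU1 y_notin card_imset ?cardsT ?card_Fp ?ltnn //; exact: fmorph_inj.
rewrite -sizeXp; apply: card_roots_lt_size => [|z]; first by rewrite -size_poly_eq0 sizeXp.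
rewrite !inE /root !hornerE subr_eq0 => /predU1P[->|/imsetP[x _ ->]]; first by rewrite yp.
by rewrite -rmorphXn -{2}(expf_card x) card_Fp.
Qed.

Lemma mu_pred_succ_neq0 z : z \in mu p.-1 :|: mu p.+1 -> z != 0.
Proof. by apply: contraTneq => ->; rewrite in_setU negb_or !notin_mu0. Qed.

Lemma psi_mu_in_Fp z : z \in mu p.-1 :|: mu p.+1 -> psi z \in iota @: [set: 'F_p].
Proof.
move=> z_mu; have z0 := mu_pred_succ_neq0 z_mu; apply: fixed_expp_in_Fp.
have zpE : z ^+ p = z * z ^+ p.-1 by rewrite -exprS prednK.
rewrite /psi -(pFrobenius_autE pcharL) rmorphD fmorphV /= pFrobenius_autE.
case/setUP: z_mu; rewrite inE => /eqP zp; first by rewrite zpE zp mulr1.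
suff -> : z ^+ p = z^-1 by rewrite invrK addrC.
by apply: (mulfI z0); rewrite divff // -exprS.
Qed.

Lemma psi_mu_pred_succ : psi @: (mu p.-1 :|: mu p.+1) = iota @: [set: 'F_p].
Proof.
apply/eqP; rewrite eqEcard; apply/andP; split.
  by apply/subsetP => _ /imsetP[z z_mu ->]; apply: psi_mu_in_Fp.
rewrite (card_imset _ (fmorph_inj iota)) cardsT card_Fp //.
rewrite -(leq_pmul2l (isT : (0 < 2)%N)) card_psi_mu_union ?dvdnn ?odd_pred_succ //.
by rewrite -addSnnS prednK // addnn -mul2n.
Qed.

Lemma iter_chebA_psi (d n : nat) x z : z != 0 -> iota x = psi z ->
  iota (iter n (@chebA p d) x) = psi (z ^+ (d ^ n)).
Proof.
move=> z0 xz; elim: n => [|n IHn]; first by rewrite expn0 expr1.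
rewrite iterS /chebA -horner_map -map_poly_comp IHn expnSr exprM /psi.
rewrite -[RHS]horner_cheb ?expf_neq0 //; congr (_.[_]).
by apply: eq_map_poly => k /=; rewrite rmorph_int.
Qed.

Lemma chebA_periodic_root (d : nat) x z : (0 < d)%N -> z != 0 -> iota x = psi z ->
  x \in Per (@chebA p d) -> exists2 N, coprime N d & z ^+ N = 1.
Proof.
(* z ^+ (d ^ n) is z or z^-1, so z ^+ (d ^ (n + n)) = z either way. *)
move=> d_gt0 z0 xz /in_Per[n n_gt0 per]; exists (d ^ (n + n)).-1.
  by apply: coprime_pred_expn; rewrite ?addn_gt0 ?n_gt0.
have psi_zd : psi z = psi (z ^+ (d ^ n)) by rewrite -(iter_chebA_psi _ _ z0 xz) per.
apply: (mulfI z0); rewrite mulr1 -exprS prednK ?expn_gt0 ?d_gt0 // expnD exprM.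
by case: (eq_psi z0 (expf_neq0 _ z0) psi_zd) => zd; rewrite zd ?exprVn zd ?invrK.
Qed.

Lemma root_chebA_periodic (d m : nat) x z : z != 0 -> iota x = psi z ->
  (0 < m)%N -> coprime m d -> z ^+ m = 1 -> x \in Per (@chebA p d).
Proof.
move=> z0 xz m_gt0 m_cop zm; apply/in_Per; exists (totient m); first by rewrite totient_gt0.
apply: (fmorph_inj iota); rewrite (iter_chebA_psi _ _ z0 xz) xz -(expr_mod _ zm).
by rewrite Euler_exp_totient 1?coprime_sym // expr_mod // expr1.
Qed.

Lemma Per_chebA_psi (d : nat) : (0 < d)%N -> iota @: Per (@chebA p d) =
  psi @: (mu (max_coprime_div p.-1 d) :|: mu (max_coprime_div p.+1 d)).
Proof.
move=> d_gt0; have [m1_dvd m1_cop _] := max_coprime_divP d predp_gt0.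
have [m2_dvd m2_cop _] := max_coprime_divP d (ltn0Sn p).
apply/setP => y; apply/imsetP/imsetP => -[u u_in ->].
  have : iota u \in psi @: (mu p.-1 :|: mu p.+1) by rewrite psi_mu_pred_succ imset_f.
  case/imsetP=> z z_mu uz; exists z => //.
  have [N N_cop zN] := chebA_periodic_root d_gt0 (mu_pred_succ_neq0 z_mu) uz u_in.
  by case/setUP: z_mu; rewrite inE => /eqP zq; apply/setUP; [left|right];
    apply: mu_max_coprime_div zq zN N_cop.
have u_mu : u \in mu p.-1 :|: mu p.+1 by move: u_in; apply/subsetP; rewrite setUSS ?mu_subset.
have /imsetP[x _ xu] := psi_mu_in_Fp u_mu; exists x => //.
have u0 := mu_pred_succ_neq0 u_mu.
by case/setUP: u_in; rewrite inE => /eqP um;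
  apply: (root_chebA_periodic u0 (esym xu) _ _ um); rewrite ?max_coprime_div_gt0.
Qed.

End QuadraticExtension.

Theorem mainTheorem1 (p d : nat) (hp : prime p) (hd : (1 < d)%N) :
  let mminus := max_coprime_div p.-1 d in
  let mplus := max_coprime_div p.+1 d in
  #|Per (@chebA p d)| = ((mminus + mplus) %/ 2)%N /\
  #|Per (@chebP p d)| = ((mminus + mplus) %/ 2).+1%N.
Proof.
move=> mminus mplus; have [F pcharF cardF] := pPrimePowerField hp (isT : (0 < 2)%N).
pose L : finFieldType := pPrimeCharType pcharF.
have pcharL : p \in [pchar L]%R by [].
have cardL : #|L| = (p ^ 2)%N by [].
have predp_gt0 := pred_prime_gt0 hp.
have [mminus_dvd _ _] := max_coprime_divP d predp_gt0.
have [mplus_dvd _ _] := max_coprime_divP d (ltn0Sn p).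
have odd_m : odd mminus = odd mplus.
  rewrite (odd_max_coprime_div _ predp_gt0) (odd_max_coprime_div _ (ltn0Sn p)).
  by rewrite odd_pred_succ ?prime_gt0.
have card_Per : #|Per (@chebA p d)| = ((mminus + mplus) %/ 2)%N.
  rewrite -(card_imset _ (fmorph_inj (in_alg L))) (Per_chebA_psi _ hp pcharL cardL (ltnW hd)).
  by rewrite -(card_psi_mu_union hp cardL _ _ mminus_dvd mplus_dvd odd_m)
    ?max_coprime_div_gt0 ?mulKn.
split=> //; rewrite Per_omap cardsU1 card_imset; last exact: Some_inj.
by rewrite card_Per; case: imsetP => // -[].
Qed.
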